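(* Consider one seller with one item and $n$ ex-post rational buyers $N=\{1,\dots,n\}$; the item's quality $q\in Q=[q_1,q_2]$ has CDF $G$ and density $g$ and is observed only by the seller; buyer $i$'s valuation $v_i(q)$ is monotone increasing with inverse $v_i^{-1}$. Suppose buyers may buy only after being recommended to buy, so a fixed-price signaling mechanism $(\pi,p)$ — with $\pi(q,s_i)\ge0$ for $i\in\{0,\dots,n\}$, $\sum_{i\in N}\pi(q,s_i)+\pi(q,s_0)=1$ for each $q$ — is feasible iff $\int_{q_1}^{v_i^{-1}(p)}\pi(q,s_i)g(q)\,\mathrm{d}q=0$ for all $i\in N$, and its revenue is $p\int_Q\sum_{i\in N}\pi(q,s_i)g(q)\,\mathrm{d}q$. Let $v_{min}^{-1}(p)=\min_{i\in N}v_i^{-1}(p)$, let $p^*\in\arg\max_p[1-G(v_{min}^{-1}(p))]\cdot p$, and let $j\in\arg\min_i v_i^{-1}(p^* )$. Define $\pi^*(q,s_0)=1$ and $\pi^*(q,s_i)=0$ for $i\in N$ when $q\in[q_1,v_{min}^{-1}(p^* ))$, and $\pi^*(q,s_j)=1$, $\pi^*(q,s_i)=0$ for $i\ne j$ (including $i=0$) when $q\in[v_{min}^{-1}(p^* ),q_2]$. Then $(\pi^*,p^* )$ is a revenue-optimal feasible mechanism.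
   Context: Signal $s_i$ ($i\in N$) recommends buyer $i$ to buy and others not to buy; $s_0$ recommends no buyer to buy. An ex-post rational buyer $i$ is willing to buy iff $v_i(q)\ge p$; the feasibility condition says a buyer recommended to buy is almost surely willing to buy. *)

From HB Require Import structures.
From mathcomp Require Import all_boot all_order all_algebra.
From mathcomp Require Import all_classical all_reals all_analysis.
Set Implicit Arguments. Unset Strict Implicit. Unset Printing Implicit Defensive.
Import Order.TTheory GRing.Theory Num.Theory.
Local Open Scope classical_set_scope.
Local Open Scope ring_scope.

Section Defs.
Variable R : realType.
Local Notation mu := (@lebesgue_measure R).

(* Quality space Q = [q1, q2]; signals: [None] = s_0 (nobody buys),
   [Some i] = s_i (buyer i recommended to buy, the others not). *)

Definition qualityCDF (q1 q2 : R) (g : R -> R) (x : R) : R :=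
  Rintegral mu (`[q1, q2] `&` `]-oo, x]) g.

Definition vmininv (n : nat) (hn : (0 < n)%N) (vinv : 'I_n -> R -> R) (p : R) : R :=
  \big[Num.min/vinv (Ordinal hn) p]_(i < n) vinv i p.

Definition signaling_scheme (n : nat) (q1 q2 : R) (pi : R -> option 'I_n -> R) : Prop :=
  (forall s, measurable_fun `[q1, q2] (fun q => pi q s)) /\
  (forall q, q \in `[q1, q2] -> forall s, 0 <= pi q s) /\
  (forall q, q \in `[q1, q2] ->
     \sum_(i < n) pi q (Some i) + pi q None = 1).

Definition feasible (n : nat) (q1 q2 : R) (g : R -> R) (vinv : 'I_n -> R -> R)
    (pi : R -> option 'I_n -> R) (p : R) : Prop :=
  signaling_scheme q1 q2 pi /\
  forall i : 'I_n,
    Rintegral mu (`[q1, q2] `&` `[q1, vinv i p]) (fun q => pi q (Some i) * g q) = 0.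

Definition revenue (n : nat) (q1 q2 : R) (g : R -> R)
    (pi : R -> option 'I_n -> R) (p : R) : R :=
  p * Rintegral mu `[q1, q2] (fun q => (\sum_(i < n) pi q (Some i)) * g q).

Definition pistar (n : nat) (hn : (0 < n)%N) (vinv : 'I_n -> R -> R) (pstar : R)
    (j : 'I_n) (q : R) (s : option 'I_n) : R :=
  if q < vmininv hn vinv pstar then (s == None)%:R else (s == Some j)%:R.

End Defs.

(* A feasible mechanism may recommend buyer i only at qualities above
   v_i^{-1}(p), up to a null set, hence only above v_min^{-1}(p).  At price p
   it therefore sells with probability at most 1 - G(v_min^{-1}(p)), so its
   revenue is at most the posted-price revenue p (1 - G(v_min^{-1}(p))) (and
   nonpositive when p <= 0), which pstar maximises.  The mechanism pistar
   attains this bound: it sells on all of [v_min^{-1}(pstar), q2], and buyer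
   j's forbidden region [q1, v_j^{-1}(pstar)] meets this set only in the point
   v_j^{-1}(pstar) = v_min^{-1}(pstar). *)

From HB Require Import structures.
From mathcomp Require Import all_boot all_order all_algebra.
From mathcomp Require Import all_classical all_reals all_analysis.
From mathcomp Require Import measurable_realfun.

Set Implicit Arguments.
Unset Strict Implicit.
Unset Printing Implicit Defensive.
Import Order.TTheory GRing.Theory Num.Theory.
Local Open Scope classical_set_scope.
Local Open Scope ring_scope.

Section Rintegral_lemmas.
Context d (T : measurableType d) (R : realType).
Variable mu : {measure set T -> \bar R}.
Implicit Types (D A B : set T) (f h : T -> R).

Lemma Rintegral_setIC D A f : measurable D -> measurable A ->
  mu.-integrable D (EFin \o f) ->
  Rintegral mu D f = Rintegral mu (D `&` A) f + Rintegral mu (D `&` ~` A) f.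
Proof.
move=> mD mA fi; rewrite -Rintegral_setU -?setIUr ?setUCr ?setIT //.
- exact: measurableI.
- exact/measurableI/measurableC.
- by apply/disj_setPS => x [[_ ?] [_ ?]].
Qed.

Lemma Rintegral_sum (I : Type) (s : seq I) D (F : I -> T -> R) :
  measurable D -> (forall i, mu.-integrable D (EFin \o F i)) ->
  Rintegral mu D (fun x => \sum_(i <- s) F i x) =
  \sum_(i <- s) Rintegral mu D (F i).
Proof.
move=> mD Fi; elim: s => [|a s ih].
  by under eq_Rintegral do rewrite big_nil; rewrite big_nil Rintegral_cst // mul0r.
under eq_Rintegral do rewrite big_cons.
rewrite big_cons -ih RintegralD //.
rewrite (_ : _ \o _ = fun x => \sum_(i <- s) (EFin \o F i) x).
  exact: integrable_sum.
by apply/funext => x; rewrite /= sumEFin.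
Qed.

Lemma ge0_subset_Rintegral A B f : measurable A -> measurable B -> A `<=` B ->
  mu.-integrable B (EFin \o f) -> (forall x, B x -> 0 <= f x) ->
  Rintegral mu A f <= Rintegral mu B f.
Proof.
move=> mA mB AB fi f0; rewrite fine_le ?integrable_fin_num //.
- exact: integrableS fi.
- by apply: ge0_subset_integral => //; case/integrableP: fi.
Qed.

Lemma integrableM_le1 D h f : measurable D -> measurable_fun D h ->
  (forall x, D x -> `|h x| <= 1) -> mu.-integrable D (EFin \o f) ->
  mu.-integrable D (EFin \o (h \* f)).
Proof.
move=> mD mh h1 fi.
have mf : measurable_fun D f by apply/measurable_EFinP; exact: measurable_int fi.
apply: le_integrable fi => //; first exact/measurable_EFinP/measurable_funM.
by move=> x Dx; rewrite lee_fin /= normrM ler_piMl ?h1.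
Qed.

End Rintegral_lemmas.

Lemma Rintegral_eq0_except_point (R : realType) (D : set R) (f : R -> R) c :
  measurable D -> measurable_fun D f -> (forall x, D x -> x != c -> f x = 0) ->
  Rintegral (@lebesgue_measure R) D f = 0.
Proof.
move=> mD mf f0; rewrite /Rintegral -(@integral_setD1 _ _ c).
- by rewrite integral0_eq //= => x [Dx /eqP xc]; rewrite f0.
- exact: measurableD.
- by apply/measurable_EFinP; apply: measurable_funS mf => //; exact: subDsetl.
Qed.

Section recommendation_mechanism.
Variables (R : realType) (n : nat) (hn : (0 < n)%N) (vinv : 'I_n -> R -> R).

Lemma vmininv_le p i : vmininv hn vinv p <= vinv i p.
Proof. exact: bigmin_le. Qed.

Lemma vmininv_eq p j : (forall i, vinv j p <= vinv i p) ->
  vmininv hn vinv p = vinv j p.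
Proof.
by move=> hj; apply/le_anti; rewrite vmininv_le; apply/bigmin_geP.
Qed.

Lemma sum_pistar p j q :
  \sum_(i < n) pistar hn vinv p j q (Some i) =
  if q < vmininv hn vinv p then 0 else 1.
Proof.
rewrite /pistar; case: ifP => _; first by rewrite big1.
rewrite (bigD1 j) //= eqxx big1 ?addr0 // => i /negPf ij /=.
by rewrite (inj_eq Some_inj) ij.
Qed.

Lemma measurable_pistar p j s (D : set R) : measurable D ->
  measurable_fun D (fun q => pistar hn vinv p j q s).
Proof.
by move=> mD; apply: measurable_fun_if => //; exact: measurable_fun_ltr.
Qed.

End recommendation_mechanism.

Section signaling_scheme.
Variables (R : realType) (n : nat) (q1 q2 : R) (pi : R -> option 'I_n -> R).
Hypothesis pi_scheme : signaling_scheme q1 q2 pi.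

Lemma signaling_scheme_sum_ge0 q : q \in `[q1, q2] ->
  0 <= \sum_(i < n) pi q (Some i).
Proof.
by case: pi_scheme => _ [pi0 _] Qq; apply: sumr_ge0 => i _; exact: pi0.
Qed.

Lemma signaling_scheme_sum_le1 q : q \in `[q1, q2] ->
  \sum_(i < n) pi q (Some i) <= 1.
Proof. by case: pi_scheme => _ [pi0 pi1] Qq; rewrite -(pi1 q Qq) lerDl pi0. Qed.

Lemma signaling_scheme_le1 q i : q \in `[q1, q2] -> `|pi q (Some i)| <= 1.
Proof.
case: pi_scheme => _ [pi0 _] Qq; rewrite ger0_norm ?pi0 //.
apply: le_trans _ (signaling_scheme_sum_le1 Qq).
by rewrite (bigD1 i) //= lerDl sumr_ge0 // => k _; exact: pi0.
Qed.

End signaling_scheme.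

Section quality_distribution.
Variables (R : realType) (q1 q2 : R) (g : R -> R).
Hypotheses (g_meas : measurable_fun `[q1, q2] g)
  (g_ge0 : forall q, q \in `[q1, q2] -> 0 <= g q)
  (g_int1 : (\int[@lebesgue_measure R]_(q in `[q1, q2]) (g q)%:E = 1)%E).
Local Notation mu := (@lebesgue_measure R).

Let mQ : measurable (`[q1, q2] : set R). Proof. exact: measurable_itv. Qed.

Lemma integrable_density : mu.-integrable `[q1, q2] (EFin \o g).
Proof.
apply/integrableP; split; first exact/measurable_EFinP.
under eq_integral => x /[!inE] Qx do rewrite /= ger0_norm ?g_ge0 //.
by rewrite g_int1 ltry.
Qed.

Lemma one_sub_qualityCDF x :
  1 - qualityCDF q1 q2 g x = Rintegral mu (`[q1, q2] `&` ~` `]-oo, x]) g.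
Proof.
have -> : 1 = Rintegral mu `[q1, q2] g by rewrite /Rintegral g_int1.
rewrite (Rintegral_setIC (mu := mu) (A := `]-oo, x])) ?integrable_density //.
by rewrite addrC addKr.
Qed.

Variables (n : nat) (hn : (0 < n)%N) (vinv : 'I_n -> R -> R).

Lemma feasible_pistar p j : (forall i, vinv j p <= vinv i p) ->
  feasible q1 q2 g vinv (pistar hn vinv p j) p.
Proof.
move=> hj; split.
  split; first by move=> s; exact: measurable_pistar.
  split=> [q _ s|q _]; first by rewrite /pistar; case: ifP.
  by rewrite sum_pistar /pistar; case: ifP => _ /=; rewrite ?add0r ?addr0.
move=> i; have mD : measurable (`[q1, q2] `&` `[q1, vinv i p] : set R).
  by apply: measurableI; exact: measurable_itv.
apply: (Rintegral_eq0_except_point (c := vinv j p)) => //.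
- apply: measurable_funM; first exact: measurable_pistar.
  by apply: measurable_funS g_meas => //; exact: subIsetl.
- move=> q [_ /=]; rewrite in_itv /= => /andP[_ le_q_vi] neq_q_vj.
  rewrite /pistar (vmininv_eq hn hj) (inj_eq Some_inj).
  case: ltP => [_|le_vj_q]; first by rewrite mul0r.
  have [eq_ij|] := eqVneq i j; last by rewrite mul0r.
  by move: neq_q_vj; rewrite eq_le le_vj_q -eq_ij le_q_vi.
Qed.

Lemma revenue_pistar p j : revenue q1 q2 g (pistar hn vinv p j) p =
  p * (1 - qualityCDF q1 q2 g (vmininv hn vinv p)).
Proof.
set c := vmininv hn vinv p; rewrite /revenue one_sub_qualityCDF; congr (_ * _).
set sold := fun q => (\sum_(i < n) pistar hn vinv p j q (Some i)) * g q.
have m_sold : measurable_fun `[q1, q2] sold.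
  apply: measurable_funM => //.
  by apply: measurable_sum => i; exact: measurable_pistar.
have sold_int : mu.-integrable `[q1, q2] (EFin \o sold).
  apply: integrableM_le1 integrable_density => //.
    by apply: measurable_sum => i; exact: measurable_pistar.
  by move=> q _; rewrite sum_pistar; case: ifP; rewrite ?normr0 ?normr1.
rewrite (Rintegral_setIC (mu := mu) (A := `]-oo, c])) //.
rewrite (Rintegral_eq0_except_point (c := c)) ?add0r.
- apply: eq_Rintegral => q /set_mem [_ /=]; rewrite in_itv /= => /negP.
  rewrite -ltNge => lt_c_q.
  by rewrite /sold sum_pistar -/c ltNge (ltW lt_c_q) mul1r.
- by apply: measurableI.
- by apply: measurable_funS m_sold => //; exact: subIsetl.
- move=> q [_ /=]; rewrite in_itv /= => le_q_c neq_q_c.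
  by rewrite /sold sum_pistar -/c ifT ?mul0r // lt_neqAle neq_q_c le_q_c.
Qed.

Section feasible_mechanism.
Variables (pi : R -> option 'I_n -> R) (p : R).
Hypothesis pi_feasible : feasible q1 q2 g vinv pi p.

Let pi_scheme : signaling_scheme q1 q2 pi. Proof. by case: pi_feasible. Qed.

Let integrable_signal_density i :
  mu.-integrable `[q1, q2] (EFin \o (fun q => pi q (Some i) * g q)).
Proof.
apply: integrableM_le1 integrable_density => //.
  exact: (proj1 pi_scheme (Some i)).
by move=> q Qq; exact: (signaling_scheme_le1 pi_scheme i Qq).
Qed.

Lemma feasible_Rintegral_below_vmininv i :
  Rintegral mu (`[q1, q2] `&` `]-oo, vmininv hn vinv p])
    (fun q => pi q (Some i) * g q) = 0.
Proof.
have [_ [pi_ge0 _]] := pi_scheme.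
apply/le_anti/andP; split; last first.
  by apply: Rintegral_ge0 => q [Qq _]; rewrite mulr_ge0 ?pi_ge0 ?g_ge0.
rewrite -(pi_feasible.2 i); apply: ge0_subset_Rintegral.
- by apply: measurableI.
- by apply: measurableI; exact: measurable_itv.
- move=> q [Qq /=]; rewrite in_itv /= => le_q_m; split => //.
  move: Qq; rewrite /= !in_itv /= => /andP[-> _].
  exact: le_trans le_q_m (vmininv_le _ _ _ i).
- by apply: integrableS (integrable_signal_density i) => //; apply: measurableI.
- by move=> q [Qq _]; rewrite mulr_ge0 ?pi_ge0 ?g_ge0.
Qed.

Lemma feasible_sales_le :
  Rintegral mu `[q1, q2] (fun q => (\sum_(i < n) pi q (Some i)) * g q) <=
  1 - qualityCDF q1 q2 g (vmininv hn vinv p).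
Proof.
set m := vmininv hn vinv p.
have sold_int : mu.-integrable `[q1, q2]
    (EFin \o (fun q => (\sum_(i < n) pi q (Some i)) * g q)).
  apply: integrableM_le1 integrable_density => //.
    by apply: measurable_sum => i; exact: (proj1 pi_scheme (Some i)).
  move=> q Qq; rewrite ger0_norm ?(signaling_scheme_sum_ge0 pi_scheme) //.
  exact: (signaling_scheme_sum_le1 pi_scheme).
rewrite one_sub_qualityCDF (Rintegral_setIC (mu := mu) (A := `]-oo, m])) //.
under eq_Rintegral do rewrite mulr_suml.
rewrite Rintegral_sum; first last.
- move=> i; apply: integrableS (integrable_signal_density i) => //.
  exact: measurableI.
- by apply: measurableI.
rewrite big1 ?add0r => [|i _]; last exact: feasible_Rintegral_below_vmininv.
have mU : measurable (`[q1, q2] `&` ~` `]-oo, m] : set R).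
  by apply: measurableI => //; apply: measurableC.
apply: le_Rintegral => //.
- by apply: integrableS sold_int.
- by apply: integrableS integrable_density.
- move=> q [Qq _]; rewrite ler_piMl ?g_ge0 //.
  exact: (signaling_scheme_sum_le1 pi_scheme).
Qed.

Lemma feasible_sales_ge0 :
  0 <= Rintegral mu `[q1, q2] (fun q => (\sum_(i < n) pi q (Some i)) * g q).
Proof.
apply: Rintegral_ge0 => q Qq.
by rewrite mulr_ge0 ?(signaling_scheme_sum_ge0 pi_scheme) ?g_ge0.
Qed.

End feasible_mechanism.

End quality_distribution.

Theorem mainTheorem9 (R : realType) (n : nat) (hn : (0 < n)%N)
    (q1 q2 : R) (hq : q1 < q2)
    (g : R -> R)
    (hg_meas : measurable_fun `[q1, q2] g)
    (hg_nneg : forall q, q \in `[q1, q2] -> 0 <= g q)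
    (hg_int : (\int[@lebesgue_measure R]_(q in `[q1, q2]) (g q)%:E = 1)%E)
    (v vinv : 'I_n -> R -> R)
    (hv_mono : forall i, {homo v i : x y / x < y})
    (hv_inv1 : forall i, cancel (v i) (vinv i))
    (hv_inv2 : forall i, cancel (vinv i) (v i))
    (pstar : R)
    (hpstar : forall p : R,
        (1 - qualityCDF q1 q2 g (vmininv hn vinv p)) * p
        <= (1 - qualityCDF q1 q2 g (vmininv hn vinv pstar)) * pstar)
    (j : 'I_n)
    (hj : forall i : 'I_n, vinv j pstar <= vinv i pstar) :
  feasible q1 q2 g vinv (pistar hn vinv pstar j) pstar /\
  forall (pi : R -> option 'I_n -> R) (p : R),
    feasible q1 q2 g vinv pi p ->
    revenue q1 q2 g pi p <= revenue q1 q2 g (pistar hn vinv pstar j) pstar.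
Proof.
split; first exact: feasible_pistar.
move=> pi p pi_feasible; rewrite (revenue_pistar hg_meas hg_nneg hg_int) mulrC.
have sales_ge0 := feasible_sales_ge0 hg_nneg pi_feasible.
have [p_le0|p_gt0] := leP p 0.
  apply: le_trans (hpstar 0); rewrite mulr0.
  exact: mulr_le0_ge0.
apply: le_trans (hpstar p); rewrite /revenue mulrC ler_wpM2r ?(ltW p_gt0) //.
exact: feasible_sales_le.
Qed.
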